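(* For every finite rooted ordered tree $\mathbf{t}$ and every $k\in\mathbb{N}^*$, \[ 0\le D_k(\mathbf{t})-\mathcal{D}_k(\mathbf{t})\le|\mathbf{t}|^k. \]
   Context: For a finite rooted ordered tree $\mathbf{t}$ with root $\emptyset$, $|\mathbf{t}|$ is its number of nodes and $d$ the graph distance. For $\mathbf{u}=(u_1,\dots,u_k)\in\mathbf{t}^k$, $\mathfrak{m}(\mathbf{u})$ is the most recent common ancestor of $u_1,\dots,u_k$, and $D_k(\mathbf{t})=\sum_{\mathbf{u}\in\mathbf{t}^k}d(\emptyset,\mathfrak{m}(\mathbf{u}))$. The contour process $C^{\mathbf{t}}$ is the continuous function on $[0,2|\mathbf{t}|]$ giving the distance to the root of a particle that starts at the root and traverses each edge (of length 1) at unit speed, visiting the nodes in depth-first lexicographic order and returning to the root at time $2|\mathbf{t}|-2$; $C^{\mathbf{t}}=0$ on $[2|\mathbf{t}|-2,2|\mathbf{t}|]$. For a function $h$ and reals $s,t$ in its domain, $m_h(s,t)=\inf_{u\in[s\wedge t,s\vee t]}h(u)$. For $x=(x_1,\dots,x_k)$, $x_{(1)}\le\dots\le x_{(k)}$ is its order statistic, and $\mathcal{D}_k(\mathbf{t})=\int_{[0,|\mathbf{t}|]^k}m_{C^{\mathbf{t}}}(2x_{(1)},2x_{(k)})\,dx$ (for $k=1$ this is $\int_0^{|\mathbf{t}|}C^{\mathbf{t}}(2x)dx$). *)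

From Stdlib Require Import Reals List.
From Coquelicot Require Import Coquelicot.
Import ListNotations.
Open Scope R_scope.

Inductive tree : Type := Node : list tree -> tree.

(* Nodes as Ulam-Harris words, listed in depth-first lexicographic order.
   The root is the empty word []. *)
Fixpoint nodes (t : tree) : list (list nat) :=
  match t with
  | Node cs =>
      [] :: (fix aux (i : nat) (cs : list tree) : list (list nat) :=
               match cs with
               | nil => nil
               | c :: cs' => map (cons i) (nodes c) ++ aux (S i) cs'
               end) 0%nat cs
  end.

Definition size (t : tree) : nat := length (nodes t).

(* longest common prefix = most recent common ancestor of two words *)
Fixpoint lcp (u v : list nat) : list nat :=
  match u, v with
  | a :: u', b :: v' => if Nat.eqb a b then a :: lcp u' v' else []
  | _, _ => []
  end.

Fixpoint mrca (us : list (list nat)) : list nat :=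
  match us with
  | [] => []
  | [u] => u
  | u :: us' => lcp u (mrca us')
  end.

Fixpoint tuples {A : Type} (k : nat) (L : list A) : list (list A) :=
  match k with
  | O => [[]]
  | S k' => flat_map (fun x => map (cons x) (tuples k' L)) L
  end.

(* D_k(t) = sum over u in t^k of d(root, m(u)) = |m(u)| *)
Definition Dk (k : nat) (t : tree) : nat :=
  fold_right Nat.add 0%nat (map (fun us => length (mrca us)) (tuples k (nodes t))).

(* Heights visited by the contour particle at integer times 0,1,...,2|t|-2. *)
Fixpoint contour_seq (t : tree) : list nat :=
  match t with
  | Node cs =>
      0%nat :: (fix aux (cs : list tree) : list nat :=
                  match cs with
                  | nil => nil
                  | c :: cs' => map S (contour_seq c) ++ [0%nat] ++ aux cs'
                  end) cs
  end.

(* Contour process C^t : linear interpolation of the contour sequence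
   (unit speed along edges of length 1), and 0 after time 2|t|-2
   (nth defaults to 0 past the end of the sequence, whose last entry is 0).
   Only its values on [0, 2|t|] matter. *)
Definition contour (t : tree) (s : R) : R :=
  let i := Z.to_nat (Int_part s) in
  let h0 := INR (nth i (contour_seq t) 0%nat) in
  let h1 := INR (nth (S i) (contour_seq t) 0%nat) in
  (INR i + 1 - s) * h0 + (s - INR i) * h1.

Definition mh (h : R -> R) (s t : R) : R :=
  real (Glb_Rbar (fun y => exists u, Rmin s t <= u <= Rmax s t /\ y = h u)).

Definition lmin (xs : list R) : R :=
  match xs with [] => 0 | x :: xs' => fold_right Rmin x xs' end.
Definition lmax (xs : list R) : R :=
  match xs with [] => 0 | x :: xs' => fold_right Rmax x xs' end.

Fixpoint cube_int (k : nat) (a b : R) (f : list R -> R) : R :=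
  match k with
  | O => f []
  | S k' => RInt (fun x => cube_int k' a b (fun xs => f (x :: xs))) a b
  end.

Definition calDk (k : nat) (t : tree) : R :=
  cube_int k 0 (INR (size t))
    (fun xs => mh (contour t) (2 * lmin xs) (2 * lmax xs)).

(* Label the r-th unit step of the contour, r < 2|t|, by its deeper endpoint; the two
   steps after time 2|t|-2 stay at the root.  Every edge is traversed twice, so every node
   is the label of exactly two steps, and summing |m(labels of J)| over the k-tuples J of
   steps gives 2^k D_k(t).  Along the contour the depth of lcp(u, v) is the minimal height
   between the visits of u and v; hence |m(labels of J)| is the minimum of C^t over the
   steps min J, ..., max J, read at the top of the first step.  On the cell of
   [0,|t|]^k where each x_i lies in the half-step j_i, the integrand m_C(2x_(1), 2x_(k))
   is an infimum over a window from inside step min J to inside step max J, so it lies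
   between |m| - 1 and |m|.  Summing over the (2|t|)^k cells of volume 2^-k sandwiches
   calD_k(t) between D_k(t) - |t|^k and D_k(t). *)

From Stdlib Require Import Reals List Lia Lra Permutation ZArith.
From Coquelicot Require Import Coquelicot.
Import ListNotations.
Open Scope R_scope.

Fixpoint tree_nested_ind (P : tree -> Prop)
    (H : forall cs : list tree, List.Forall P cs -> P (Node cs)) (t : tree) : P t :=
  match t with
  | Node cs =>
      H cs ((fix all (l : list tree) : List.Forall P l :=
               match l with
               | [] => List.Forall_nil _
               | c :: l' => List.Forall_cons _ (tree_nested_ind P H c) (all l')
               end) cs)
  end.

Fixpoint contour_words (t : tree) : list (list nat) :=
  match t with
  | Node cs =>
      [] :: (fix aux (i : nat) (cs : list tree) :=
               match cs with
               | [] => []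
               | c :: cs' => map (cons i) (contour_words c) ++ [] :: aux (S i) cs'
               end) 0%nat cs
  end.

Fixpoint contour_words_children (i : nat) (cs : list tree) : list (list nat) :=
  match cs with
  | [] => []
  | c :: cs' => map (cons i) (contour_words c) ++ [] :: contour_words_children (S i) cs'
  end.

Fixpoint nodes_children (i : nat) (cs : list tree) : list (list nat) :=
  match cs with
  | [] => []
  | c :: cs' => map (cons i) (nodes c) ++ nodes_children (S i) cs'
  end.

Fixpoint contour_seq_children (cs : list tree) : list nat :=
  match cs with
  | [] => []
  | c :: cs' => map S (contour_seq c) ++ [0%nat] ++ contour_seq_children cs'
  end.

Lemma contour_words_Node cs : contour_words (Node cs) = [] :: contour_words_children 0 cs.
Proof. reflexivity. Qed.

Lemma nodes_Node cs : nodes (Node cs) = [] :: nodes_children 0 cs.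
Proof. reflexivity. Qed.

Lemma contour_seq_Node cs : contour_seq (Node cs) = 0%nat :: contour_seq_children cs.
Proof. reflexivity. Qed.

Lemma contour_seq_words t : contour_seq t = map (@length nat) (contour_words t).
Proof.
  induction t as [cs IHcs] using tree_nested_ind.
  rewrite contour_seq_Node, contour_words_Node; cbn [map]; f_equal.
  generalize 0%nat; induction IHcs as [|c cs IHc _ IH]; intro i; [reflexivity|].
  cbn [contour_seq_children contour_words_children].
  rewrite map_app, IHc, !map_map; cbn [map app]; rewrite (IH (S i)); reflexivity.
Qed.

Lemma contour_words_head t : exists ws, contour_words t = [] :: ws.
Proof. destruct t; eexists; reflexivity. Qed.

Lemma nodes_head t : exists us, nodes t = [] :: us.
Proof. destruct t; eexists; reflexivity. Qed.

Lemma contour_words_children_last i cs :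
  contour_words_children i cs = [] \/ exists ws, contour_words_children i cs = ws ++ [[]].
Proof.
  revert i; induction cs as [|c cs IH]; intro i; [left; reflexivity|right].
  cbn [contour_words_children].
  destruct (IH (S i)) as [-> | [ws ->]].
  - exists (map (cons i) (contour_words c)); reflexivity.
  - exists (map (cons i) (contour_words c) ++ [] :: ws); rewrite <- app_assoc; reflexivity.
Qed.

Lemma contour_words_last t : exists ws, contour_words t = ws ++ [[]].
Proof.
  destruct t as [cs]; rewrite contour_words_Node.
  destruct (contour_words_children_last 0 cs) as [-> | [ws ->]].
  - exists []; reflexivity.
  - exists ([] :: ws); reflexivity.
Qed.

(** * Labelling each step of the contour by its deeper endpoint *)

Definition deeper (u v : list nat) : list nat :=
  if Nat.ltb (length u) (length v) then v else u.

Fixpoint deeper_steps (L : list (list nat)) : list (list nat) :=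
  match L with
  | u :: ((v :: _) as L') => deeper u v :: deeper_steps L'
  | _ => []
  end.

Lemma deeper_steps_cons2 u v L :
  deeper_steps (u :: v :: L) = deeper u v :: deeper_steps (v :: L).
Proof. reflexivity. Qed.

Lemma deeper_cons i u v : deeper (i :: u) (i :: v) = i :: deeper u v.
Proof.
  unfold deeper; cbn [length].
  change (Nat.ltb (S (length u)) (S (length v))) with (Nat.ltb (length u) (length v)).
  now destruct (Nat.ltb (length u) (length v)).
Qed.

Lemma deeper_steps_app A u B :
  deeper_steps (A ++ u :: B) = deeper_steps (A ++ [u]) ++ deeper_steps (u :: B).
Proof.
  induction A as [|a [|a' A'] IH]; [reflexivity|reflexivity|].
  cbn [app] in IH |- *; rewrite deeper_steps_cons2, IH; reflexivity.
Qed.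

Lemma deeper_steps_map_cons i L :
  deeper_steps (map (cons i) L) = map (cons i) (deeper_steps L).
Proof.
  induction L as [|u [|v L'] IH]; [reflexivity|reflexivity|].
  cbn [map] in IH |- *; rewrite !deeper_steps_cons2, IH, deeper_cons; reflexivity.
Qed.

Lemma deeper_steps_subtree i c :
  deeper_steps ([] :: map (cons i) (contour_words c) ++ [[]])
  = [i] :: map (cons i) (deeper_steps (contour_words c)) ++ [[i]].
Proof.
  destruct (contour_words_head c) as [ws Ehead].
  destruct (contour_words_last c) as [ws' Elast].
  assert (Eend : deeper_steps ([] :: map (cons i) (contour_words c) ++ [[]])
                 = deeper_steps ([] :: map (cons i) (contour_words c)) ++ [[i]]).
  { rewrite Elast, map_app, <- app_assoc; cbn [map app].
    change ([] :: map (cons i) ws' ++ [i] :: [[]])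
      with (([] :: map (cons i) ws') ++ [i] :: [[]]).
    rewrite deeper_steps_app; reflexivity. }
  rewrite Eend, <- deeper_steps_map_cons, Ehead; reflexivity.
Qed.

Lemma perm_app_interleave {A} (M N : list A) x :
  Permutation ((M ++ M) ++ x :: N ++ N) ((M ++ N) ++ x :: M ++ N).
Proof.
  rewrite <- !app_assoc; apply Permutation_app_head; cbn [app].
  eapply Permutation_trans; [|apply Permutation_app_comm]; cbn [app].
  rewrite <- app_assoc; apply Permutation_sym, Permutation_middle.
Qed.

(* Each edge is traversed twice, and both times its deeper endpoint is its child. *)
Lemma deeper_steps_contour_words t :
  Permutation (deeper_steps (contour_words t)) (tl (nodes t) ++ tl (nodes t)).
Proof.
  induction t as [cs IHcs] using tree_nested_ind.
  rewrite contour_words_Node, nodes_Node; cbn [tl].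
  generalize 0%nat; induction IHcs as [|c cs IHc _ IH]; intro i; [reflexivity|].
  cbn [contour_words_children nodes_children].
  change ([] :: map (cons i) (contour_words c) ++ [] :: contour_words_children (S i) cs)
    with (([] :: map (cons i) (contour_words c)) ++ [] :: contour_words_children (S i) cs).
  rewrite deeper_steps_app; cbn [app]; rewrite deeper_steps_subtree.
  destruct (nodes_head c) as [us Eus]; rewrite Eus in IHc |- *; cbn [tl map] in IHc |- *.
  apply (Permutation_map (cons i)) in IHc; rewrite map_app in IHc.
  rewrite <- app_comm_cons; apply perm_skip.
  rewrite <- app_assoc; cbn [app].
  eapply Permutation_trans; [apply Permutation_app_tail, IHc|].
  eapply Permutation_trans; [apply Permutation_app_head, perm_skip, IH|].
  apply perm_app_interleave.
Qed.

Lemma deeper_steps_nth L :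
  map (fun r => deeper (nth r L []) (nth (S r) L [])) (seq 0 (length L - 1)) = deeper_steps L.
Proof.
  induction L as [|u [|v L'] IH]; [reflexivity|reflexivity|].
  rewrite deeper_steps_cons2, <- IH; cbn [length].
  replace (S (S (length L')) - 1)%nat with (S (length (v :: L') - 1)) by (cbn; lia).
  cbn [seq map]; f_equal; rewrite <- seq_shift, map_map; reflexivity.
Qed.

Lemma length_deeper_steps L : length (deeper_steps L) = (length L - 1)%nat.
Proof. now rewrite <- deeper_steps_nth, length_map, length_seq. Qed.

(* Two extra steps at the root account for the two copies of the root. *)
Lemma deeper_steps_padded t :
  Permutation (deeper_steps (contour_words t ++ [[]; []])) (nodes t ++ nodes t).
Proof.
  destruct (contour_words_last t) as [ws Ews]; destruct (nodes_head t) as [us Eus].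
  assert (Epad : deeper_steps (contour_words t ++ [[]; []])
                 = deeper_steps (contour_words t) ++ [[]; []]).
  { rewrite Ews, <- app_assoc; cbn [app]; rewrite (deeper_steps_app ws [] [[]; []]).
    reflexivity. }
  rewrite Epad; eapply Permutation_trans; [apply Permutation_app_tail, deeper_steps_contour_words|].
  rewrite Eus; cbn [tl]; rewrite <- app_assoc.
  apply Permutation_sym; rewrite app_assoc; apply Permutation_cons_app.
  eapply Permutation_trans; [apply Permutation_sym, Permutation_middle|].
  rewrite <- app_assoc, (app_assoc us us); apply Permutation_cons_app.
  rewrite app_nil_r; reflexivity.
Qed.

(** * Depth of common ancestors along the contour *)

Lemma lcp_nil_r u : lcp u [] = [].
Proof. now destruct u. Qed.

Lemma lcp_cons_eq i u v : lcp (i :: u) (i :: v) = i :: lcp u v.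
Proof. cbn; now rewrite Nat.eqb_refl. Qed.

Lemma lcp_diag u : lcp u u = u.
Proof. induction u as [|a u IH]; [reflexivity|]; now rewrite lcp_cons_eq, IH. Qed.

Lemma lcp_comm u v : lcp u v = lcp v u.
Proof.
  revert v; induction u as [|a u IH]; intros [|b v]; cbn; auto.
  rewrite Nat.eqb_sym; destruct (Nat.eqb b a) eqn:E; auto.
  apply Nat.eqb_eq in E; subst; now rewrite IH.
Qed.

Definition word_at (L : list (list nat)) (r : nat) : list nat := nth r L [].

Definition contour_like (w : nat -> list nat) (n : nat) : Prop :=
  (forall p q, (p <= q < n)%nat ->
     (forall r, (p <= r <= q)%nat -> (length (lcp (w p) (w q)) <= length (w r))%nat) /\
     exists r, (p <= r <= q)%nat /\ length (lcp (w p) (w q)) = length (w r)) /\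
  (forall r, (S r < n)%nat ->
     (length (w (S r)) <= S (length (w r)))%nat /\ (length (w r) <= S (length (w (S r))))%nat).

Lemma word_at_cat_l A B r : (r < length A)%nat -> word_at (A ++ [] :: B) r = word_at A r.
Proof. intro; unfold word_at; now rewrite app_nth1. Qed.

Lemma word_at_cat_mid A B r : r = length A -> word_at (A ++ [] :: B) r = [].
Proof.
  intro; unfold word_at; rewrite app_nth2 by lia.
  now replace (r - length A)%nat with 0%nat by lia.
Qed.

Lemma word_at_cat_r A B r :
  (length A < r)%nat -> word_at (A ++ [] :: B) r = word_at B (r - length A - 1).
Proof.
  intro; unfold word_at; rewrite app_nth2 by lia.
  set (m := (r - length A - 1)%nat).
  now replace (r - length A)%nat with (S m) by (unfold m; lia).
Qed.

Lemma contour_like_cat A B :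
  contour_like (word_at A) (length A) -> contour_like (word_at B) (length B) ->
  (forall x y, In x A -> In y B -> lcp x y = []) ->
  (forall r, S r = length A -> (length (word_at A r) <= 1)%nat) ->
  ((0 < length B)%nat -> (length (word_at B 0) <= 1)%nat) ->
  contour_like (word_at (A ++ [] :: B)) (length (A ++ [] :: B)).
Proof.
  intros [minA stepA] [minB stepB] disjoint lastA firstB.
  rewrite length_app; cbn [length]; split.
  - intros p q Hpq.
    destruct (Nat.lt_ge_cases q (length A)) as [Hq|Hq].
    { destruct (minA p q ltac:(lia)) as [lower [r0 [Hr0 E0]]].
      rewrite !word_at_cat_l by lia; split.
      - intros r Hr; rewrite word_at_cat_l by lia; apply lower; lia.
      - exists r0; split; [assumption|]; now rewrite word_at_cat_l by lia. }
    destruct (Nat.lt_ge_cases (length A) p) as [Hp|Hp].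
    { destruct (minB (p - length A - 1)%nat (q - length A - 1)%nat ltac:(lia))
        as [lower [r0 [Hr0 E0]]].
      rewrite !word_at_cat_r by lia; split.
      - intros r Hr; rewrite word_at_cat_r by lia; apply lower; lia.
      - exists (r0 + length A + 1)%nat; split; [lia|].
        rewrite word_at_cat_r by lia.
        now replace (r0 + length A + 1 - length A - 1)%nat with r0 by lia. }
    assert (Eroot : lcp (word_at (A ++ [] :: B) p) (word_at (A ++ [] :: B) q) = []).
    { destruct (Nat.eq_dec p (length A)) as [->|Hp'];
        [now rewrite word_at_cat_mid|].
      destruct (Nat.eq_dec q (length A)) as [->|Hq'];
        [now rewrite (word_at_cat_mid A B (length A)), lcp_nil_r|].
      rewrite word_at_cat_l, word_at_cat_r by lia.
      apply disjoint; apply nth_In; lia. }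
    rewrite Eroot; split; [cbn; lia|].
    exists (length A); split; [lia|]; now rewrite word_at_cat_mid.
  - intros r Hr.
    destruct (Nat.lt_ge_cases (S r) (length A)) as [H1|H1].
    { rewrite !word_at_cat_l by lia; apply stepA; lia. }
    destruct (Nat.eq_dec (S r) (length A)) as [H2|H2].
    { rewrite (word_at_cat_l A B r), (word_at_cat_mid A B (S r)) by lia.
      specialize (lastA r H2); cbn; lia. }
    destruct (Nat.eq_dec r (length A)) as [H3|H3].
    { rewrite (word_at_cat_mid A B r), (word_at_cat_r A B (S r)) by lia.
      replace (S r - length A - 1)%nat with 0%nat by lia.
      specialize (firstB ltac:(lia)); cbn; lia. }
    rewrite !word_at_cat_r by lia.
    replace (S r - length A - 1)%nat with (S (r - length A - 1)) by lia.
    apply stepB; lia.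
Qed.

Lemma word_at_map_cons i A r :
  (r < length A)%nat -> word_at (map (cons i) A) r = i :: word_at A r.
Proof.
  intro; unfold word_at; rewrite (nth_indep _ _ [i]) by now rewrite length_map.
  apply map_nth.
Qed.

Lemma contour_like_map_cons i A :
  contour_like (word_at A) (length A) ->
  contour_like (word_at (map (cons i) A)) (length (map (cons i) A)).
Proof.
  rewrite length_map; intros [minA stepA]; split.
  - intros p q Hpq; rewrite !word_at_map_cons, lcp_cons_eq by lia.
    destruct (minA p q Hpq) as [lower [r0 [Hr0 E0]]]; split.
    + intros r Hr; rewrite word_at_map_cons by lia; cbn; specialize (lower r Hr); lia.
    + exists r0; split; [assumption|]; rewrite word_at_map_cons by lia; cbn; lia.
  - intros r Hr; rewrite !word_at_map_cons by lia; cbn; specialize (stepA r Hr); lia.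
Qed.

Lemma contour_words_children_in j cs y :
  In y (contour_words_children j cs) -> y = [] \/ exists j' v, y = j' :: v /\ (j <= j')%nat.
Proof.
  revert j; induction cs as [|c cs IH]; intros j Hy; cbn in Hy; [contradiction|].
  apply in_app_or in Hy; destruct Hy as [Hy|[Hy|Hy]].
  - apply in_map_iff in Hy; destruct Hy as [x [<- _]]; right; now exists j, x.
  - now left.
  - destruct (IH (S j) Hy) as [E|[j' [v [E Hj]]]]; [now left|].
    right; exists j', v; split; [assumption|lia].
Qed.

Lemma contour_words_children_first i cs :
  (0 < length (contour_words_children i cs))%nat ->
  word_at (contour_words_children i cs) 0 = [i].
Proof.
  destruct cs as [|c cs]; cbn; intro H; [lia|].
  destruct (contour_words_head c) as [ws ->]; reflexivity.
Qed.

Lemma contour_words_nth_last t r :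
  S r = length (contour_words t) -> word_at (contour_words t) r = [].
Proof.
  destruct (contour_words_last t) as [ws ->]; rewrite length_app; cbn; intro H.
  unfold word_at; rewrite app_nth2 by lia.
  now replace (r - length ws)%nat with 0%nat by lia.
Qed.

Lemma contour_like_nil : contour_like (word_at []) 0.
Proof. split; intros; cbn in *; lia. Qed.

Lemma contour_words_contour_like t :
  contour_like (word_at (contour_words t)) (length (contour_words t)).
Proof.
  induction t as [cs IHcs] using tree_nested_ind.
  assert (Hchildren : forall i, contour_like (word_at (contour_words_children i cs))
                                             (length (contour_words_children i cs))).
  { induction IHcs as [|c cs IHc _ IH]; intro i; [exact contour_like_nil|].
    apply contour_like_cat.
    - now apply contour_like_map_cons.
    - apply IH.
    - intros x y Hx Hy; apply in_map_iff in Hx; destruct Hx as [x' [<- _]].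
      destruct (contour_words_children_in _ _ _ Hy) as [->|[j' [v [-> Hj]]]];
        [apply lcp_nil_r|].
      cbn; destruct (Nat.eqb i j') eqn:E; [apply Nat.eqb_eq in E; lia|reflexivity].
    - intros r Hr; rewrite length_map in Hr.
      rewrite word_at_map_cons, contour_words_nth_last by lia; cbn; lia.
    - intro; rewrite contour_words_children_first by assumption; cbn; lia. }
  rewrite contour_words_Node; change ([] :: ?L) with ([] ++ [] :: L).
  apply contour_like_cat; [exact contour_like_nil|apply Hchildren| |cbn; lia|].
  - intros x y [].
  - intro; rewrite contour_words_children_first by assumption; cbn; lia.
Qed.

Section ContourOfTree.
Variable t : tree.

Definition word (r : nat) : list nat := word_at (contour_words t) r.
Definition height (r : nat) : nat := length (word r).
Definition edge_label (r : nat) : list nat := deeper (word r) (word (S r)).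
Definition edge_top (r : nat) : nat := Nat.max (height r) (height (S r)).

Lemma word_overflow r : (length (contour_words t) <= r)%nat -> word r = [].
Proof. intro; unfold word, word_at; now apply nth_overflow. Qed.

Lemma lcp_word_range_min p q : (p <= q)%nat ->
  (forall r, (p <= r <= q)%nat -> (length (lcp (word p) (word q)) <= height r)%nat) /\
  exists r, (p <= r <= q)%nat /\ length (lcp (word p) (word q)) = height r.
Proof.
  intro Hpq; destruct (Nat.lt_ge_cases q (length (contour_words t))) as [H|H].
  - apply (proj1 (contour_words_contour_like t)); lia.
  - rewrite (word_overflow q H), lcp_nil_r; split; [intros; cbn; lia|].
    exists q; split; [lia|]; unfold height; now rewrite word_overflow.
Qed.

Lemma height_step r : (height (S r) <= S (height r))%nat /\ (height r <= S (height (S r)))%nat.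
Proof.
  destruct (Nat.lt_ge_cases (S r) (length (contour_words t))) as [H|H].
  - now apply (proj2 (contour_words_contour_like t)).
  - unfold height; rewrite (word_overflow (S r)) by assumption.
    destruct (Nat.eq_dec (S r) (length (contour_words t))) as [E|E].
    + unfold word; rewrite contour_words_nth_last by assumption; cbn; lia.
    + rewrite word_overflow by lia; cbn; lia.
Qed.

Lemma length_edge_label r : length (edge_label r) = edge_top r.
Proof.
  unfold edge_label, deeper, edge_top, height.
  destruct (Nat.ltb (length (word r)) (length (word (S r)))) eqn:E;
    [apply Nat.ltb_lt in E|apply Nat.ltb_ge in E]; lia.
Qed.

(* [X] is the minimum of the contour over the steps [a, ..., b], except that the first
   step only contributes its top: its lower endpoint lies outside the cell. *)
Definition step_range_min (a b X : nat) : Prop :=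
  (X <= edge_top a)%nat /\ (forall r, (a < r <= b)%nat -> (X <= height r)%nat) /\
  (X = edge_top a \/ exists r, (a < r <= b)%nat /\ X = height r).

Lemma lcp_edge_labels a b : (a <= b)%nat ->
  step_range_min a b (length (lcp (edge_label a) (edge_label b))).
Proof.
  intro Hab; destruct (Nat.eq_dec a b) as [<-|Hne].
  { rewrite lcp_diag, length_edge_label; split; [lia|]; split; [intros; lia|now left]. }
  assert (Ha : exists p, (p = a \/ p = S a) /\ edge_label a = word p /\ edge_top a = height p).
  { unfold edge_label, deeper, edge_top, height.
    destruct (Nat.ltb (length (word a)) (length (word (S a)))) eqn:E;
      [apply Nat.ltb_lt in E; exists (S a)|apply Nat.ltb_ge in E; exists a];
      (split; [tauto|split; [reflexivity|lia]]). }
  assert (Hb : exists q, (q = b \/ (q = S b /\ (height b < height (S b))%nat))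
                         /\ edge_label b = word q).
  { unfold edge_label, deeper, height.
    destruct (Nat.ltb (length (word b)) (length (word (S b)))) eqn:E;
      [apply Nat.ltb_lt in E; exists (S b)|exists b]; split; auto. }
  destruct Ha as [p [Hp [-> Etop]]]; destruct Hb as [q [Hq ->]].
  destruct (lcp_word_range_min p q ltac:(lia)) as [lower [r0 [Hr0 E0]]].
  split; [|split].
  - rewrite Etop; apply lower; lia.
  - intros r Hr; apply lower; lia.
  - destruct (Nat.eq_dec r0 a) as [->|H1].
    { left; rewrite E0; destruct Hp as [->| ->]; lia. }
    destruct (Nat.eq_dec r0 (S b)) as [->|H2].
    { exfalso; destruct Hq as [->|[-> Hlt]]; [lia|]; specialize (lower b ltac:(lia)); lia. }
    right; exists r0; split; [lia|assumption].
Qed.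

Lemma step_range_min_le a b x y X Y : (a <= x)%nat -> (x <= y)%nat -> (y <= b)%nat ->
  step_range_min a b X -> step_range_min x y Y -> (X <= Y)%nat.
Proof.
  intros Hax Hxy Hyb [X1 [X2 _]] [_ [_ [->|[r [Hr ->]]]]].
  - destruct (Nat.eq_dec a x) as [<-|Hne]; [assumption|].
    unfold edge_top; specialize (X2 x ltac:(lia)); lia.
  - apply X2; lia.
Qed.

End ContourOfTree.

Definition is_prefix (M y : list nat) : Prop := exists z, y = M ++ z.

Lemma is_prefix_refl M : is_prefix M M.
Proof. exists []; now rewrite app_nil_r. Qed.

Lemma is_prefix_trans M N y : is_prefix M N -> is_prefix N y -> is_prefix M y.
Proof. intros [z1 ->] [z2 ->]; exists (z1 ++ z2); symmetry; apply app_assoc. Qed.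

Lemma lcp_prefix_l u v : is_prefix (lcp u v) u.
Proof.
  revert v; induction u as [|a u IH]; intros [|b v]; cbn; try (exists []; reflexivity).
  - now exists (a :: u).
  - destruct (Nat.eqb a b); [|now exists (a :: u)].
    destruct (IH v) as [z Hz]; exists z; cbn; now rewrite <- Hz.
Qed.

Lemma lcp_prefix_r u v : is_prefix (lcp u v) v.
Proof. rewrite lcp_comm; apply lcp_prefix_l. Qed.

Lemma length_le_lcp M u v : is_prefix M u -> is_prefix M v -> (length M <= length (lcp u v))%nat.
Proof.
  intros [z1 ->] [z2 ->]; induction M as [|a M IH]; cbn; [lia|].
  rewrite Nat.eqb_refl; cbn; lia.
Qed.

Lemma length_lcp_prefix u M y :
  is_prefix M y -> length (lcp u M) = Nat.min (length (lcp u y)) (length M).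
Proof.
  intros [z ->]; revert u; induction M as [|a M IH]; intros u; cbn.
  - rewrite lcp_nil_r; cbn; lia.
  - destruct u as [|b u]; cbn; [lia|].
    destruct (Nat.eqb b a); cbn; [rewrite IH|]; lia.
Qed.

Lemma mrca_cons2 u v us : mrca (u :: v :: us) = lcp u (mrca (v :: us)).
Proof. reflexivity. Qed.

Lemma mrca_prefix us y : In y us -> is_prefix (mrca us) y.
Proof.
  induction us as [|u [|v us'] IH]; intro Hy; [destruct Hy| |].
  - destruct Hy as [<-|[]]; apply is_prefix_refl.
  - rewrite mrca_cons2; destruct Hy as [<-|Hy]; [apply lcp_prefix_l|].
    eapply is_prefix_trans; [apply lcp_prefix_r|now apply IH].
Qed.

Lemma length_mrca_le us x y : In x us -> In y us -> (length (mrca us) <= length (lcp x y))%nat.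
Proof. intros; apply length_le_lcp; now apply mrca_prefix. Qed.

Lemma length_mrca_ge us m : us <> [] ->
  (forall x y, In x us -> In y us -> (m <= length (lcp x y))%nat) ->
  (m <= length (mrca us))%nat.
Proof.
  induction us as [|u [|v us'] IH]; intros Hne H; [congruence| |].
  - specialize (H u u (or_introl eq_refl) (or_introl eq_refl)); now rewrite lcp_diag in H.
  - rewrite mrca_cons2, (length_lcp_prefix u (mrca (v :: us')) v)
      by (apply mrca_prefix; now left).
    apply Nat.min_glb; [apply H; cbn; auto|].
    apply IH; [congruence|]; intros x y Hx Hy; apply H; cbn; auto.
Qed.

Definition nat_lmin (L : list nat) : nat :=
  match L with [] => 0%nat | j :: J => fold_right Nat.min j J end.
Definition nat_lmax (L : list nat) : nat :=
  match L with [] => 0%nat | j :: J => fold_right Nat.max j J end.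

Lemma nat_lmin_in L : L <> [] -> In (nat_lmin L) L.
Proof.
  destruct L as [|j J]; [congruence|]; intros _; cbn.
  induction J as [|x J IH]; cbn; [now left|].
  destruct (Nat.min_spec x (fold_right Nat.min j J)) as [[_ ->]|[_ ->]]; [now right; left|].
  destruct IH; tauto.
Qed.

Lemma nat_lmin_le L x : In x L -> (nat_lmin L <= x)%nat.
Proof.
  destruct L as [|j J]; [intros []|]; cbn; intros [<-|Hx].
  - induction J; cbn; lia.
  - induction J as [|y J IH]; cbn in *; [destruct Hx|].
    destruct Hx as [<-|Hx]; [lia|]; specialize (IH Hx); lia.
Qed.

Lemma nat_lmax_in L : L <> [] -> In (nat_lmax L) L.
Proof.
  destruct L as [|j J]; [congruence|]; intros _; cbn.
  induction J as [|x J IH]; cbn; [now left|].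
  destruct (Nat.max_spec x (fold_right Nat.max j J)) as [[_ ->]|[_ ->]]; [|now right; left].
  destruct IH; tauto.
Qed.

Lemma nat_lmax_ge L x : In x L -> (x <= nat_lmax L)%nat.
Proof.
  destruct L as [|j J]; [intros []|]; cbn; intros [<-|Hx].
  - induction J; cbn; lia.
  - induction J as [|y J IH]; cbn in *; [destruct Hx|].
    destruct Hx as [<-|Hx]; [lia|]; specialize (IH Hx); lia.
Qed.

Lemma length_mrca_edge_labels t J : J <> [] ->
  length (mrca (map (edge_label t) J))
  = length (lcp (edge_label t (nat_lmin J)) (edge_label t (nat_lmax J))).
Proof.
  intro HJ; apply Nat.le_antisymm.
  { apply length_mrca_le; apply in_map; [apply nat_lmin_in|apply nat_lmax_in]; assumption. }
  apply length_mrca_ge; [destruct J; cbn; congruence|].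
  intros x y Hx Hy; apply in_map_iff in Hx, Hy.
  destruct Hx as [i [<- Hi]], Hy as [j [<- Hj]].
  pose proof (nat_lmin_le J i Hi); pose proof (nat_lmax_ge J i Hi).
  pose proof (nat_lmin_le J j Hj); pose proof (nat_lmax_ge J j Hj).
  destruct (Nat.le_ge_cases i j) as [Hij|Hij]; [|rewrite (lcp_comm (edge_label t i))].
  - apply (step_range_min_le t (nat_lmin J) (nat_lmax J) i j); try apply lcp_edge_labels; lia.
  - apply (step_range_min_le t (nat_lmin J) (nat_lmax J) j i); try apply lcp_edge_labels; lia.
Qed.

(** * Summing over tuples of steps *)

Lemma tuples_map {A B} (f : A -> B) k L : tuples k (map f L) = map (map f) (tuples k L).
Proof.
  induction k as [|k IH]; [reflexivity|]; cbn [tuples].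
  rewrite (flat_map_ext _ (fun x => map (cons x) (map (map f) (tuples k L))))
    by (intro; now rewrite IH).
  generalize (tuples k L); intro T; clear IH.
  induction L as [|x L IHL]; [reflexivity|]; cbn.
  now rewrite map_app, IHL, !map_map.
Qed.

Lemma length_tuples {A} k (L : list A) : length (tuples k L) = (length L ^ k)%nat.
Proof.
  induction k as [|k IH]; [reflexivity|]; cbn [tuples Nat.pow].
  rewrite <- IH; generalize (tuples k L); intro T; clear IH.
  induction L as [|x L IHL]; [reflexivity|]; cbn.
  now rewrite length_app, length_map, IHL.
Qed.

Lemma list_sum_flat_map_cons {A} (h : list A -> nat) T L :
  list_sum (map h (flat_map (fun x => map (cons x) T) L))
  = list_sum (map (fun x => list_sum (map (fun u => h (x :: u)) T)) L).
Proof.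
  induction L as [|x L IH]; [reflexivity|]; cbn.
  now rewrite map_app, list_sum_app, IH, map_map.
Qed.

Lemma list_sum_tuples_perm {A} k (h : list A -> nat) L L' : Permutation L L' ->
  list_sum (map h (tuples k L)) = list_sum (map h (tuples k L')).
Proof.
  intro HL; revert h; induction k as [|k IH]; intro h; [reflexivity|]; cbn [tuples].
  rewrite !list_sum_flat_map_cons.
  rewrite (Permutation_list_sum (Permutation_map _ HL)).
  f_equal; apply map_ext; intro; apply IH.
Qed.

Lemma list_sum_tuples_app_diag {A} k (h : list A -> nat) L :
  list_sum (map h (tuples k (L ++ L))) = (2 ^ k * list_sum (map h (tuples k L)))%nat.
Proof.
  revert h; induction k as [|k IH]; intro h; [cbn; lia|]; cbn [tuples].
  rewrite !list_sum_flat_map_cons.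
  rewrite (map_ext _ (fun x => 2 ^ k * list_sum (map (fun u => h (x :: u)) (tuples k L)))%nat)
    by (intro; apply IH).
  assert (Hscale : forall (g : A -> nat) M,
             list_sum (map (fun x => 2 ^ k * g x)%nat M) = (2 ^ k * list_sum (map g M))%nat).
  { intros g M; induction M as [|x M IHM]; simpl; [lia|]; rewrite IHM; lia. }
  rewrite map_app, list_sum_app, !Hscale, Nat.pow_succ_r'; lia.
Qed.

(* The two extra steps past time 2|t|-2 are labelled by the root, since [word] is [[]] there. *)
Lemma edge_labels_seq t :
  map (edge_label t) (seq 0 (2 * size t)) = deeper_steps (contour_words t ++ [[]; []]).
Proof.
  rewrite <- deeper_steps_nth.
  replace (length (contour_words t ++ [[]; []]) - 1)%nat with (2 * size t)%nat.
  2: { rewrite <- length_deeper_steps, (Permutation_length (deeper_steps_padded t)).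
       rewrite length_app; unfold size; lia. }
  apply map_ext; intro r.
  assert (Hpad : forall m, nth m (contour_words t ++ [[]; []]) [] = word t m).
  { intro m; unfold word, word_at.
    destruct (Nat.lt_ge_cases m (length (contour_words t))).
    - now rewrite app_nth1.
    - rewrite app_nth2, (nth_overflow (contour_words t)) by assumption.
      destruct (m - length (contour_words t))%nat as [|[|[|]]]; reflexivity. }
  now rewrite !Hpad.
Qed.

Lemma sum_mrca_edge_labels t k :
  list_sum (map (fun J => length (mrca (map (edge_label t) J))) (tuples k (seq 0 (2 * size t))))
  = (2 ^ k * Dk k t)%nat.
Proof.
  rewrite <- (map_map (map (edge_label t)) (fun us => length (mrca us))).
  rewrite <- tuples_map, edge_labels_seq.
  rewrite (list_sum_tuples_perm k _ _ _ (deeper_steps_padded t)).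
  apply list_sum_tuples_app_diag.
Qed.

Lemma contour_seq_nth t r : nth r (contour_seq t) 0%nat = height t r.
Proof.
  rewrite contour_seq_words; change 0%nat with (length (@nil nat)).
  apply map_nth.
Qed.

Definition contour_piece t (j : nat) (s : R) : R :=
  (INR j + 1 - s) * INR (height t j) + (s - INR j) * INR (height t (S j)).

Lemma Int_part_eq s z : IZR z <= s < IZR z + 1 -> Int_part s = z.
Proof.
  intros [H1 H2]; destruct (base_Int_part s) as [B1 B2].
  assert (A1 : (Int_part s < z + 1)%Z) by (apply lt_IZR; rewrite plus_IZR; cbn; lra).
  assert (A2 : (z < Int_part s + 1)%Z) by (apply lt_IZR; rewrite plus_IZR; cbn; lra).
  lia.
Qed.

(* On the left of 0 the integer part is negative and [Z.to_nat] truncates it to 0. *)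
Lemma contour_eq_piece t j s :
  (INR j <= s \/ j = 0%nat) -> s <= INR j + 1 -> contour t s = contour_piece t j s.
Proof.
  intros H1 H2; unfold contour, contour_piece; rewrite !contour_seq_nth.
  destruct (Rlt_or_le s (INR j + 1)) as [H3|H3].
  - replace (Z.to_nat (Int_part s)) with j; [reflexivity|].
    destruct (Rle_or_lt (INR j) s) as [H4|H4].
    + rewrite (Int_part_eq s (Z.of_nat j)) by (rewrite <- INR_IZR_INZ; lra).
      symmetry; apply Nat2Z.id.
    + destruct H1 as [H1| ->]; [lra|]; cbn in H4.
      destruct (base_Int_part s) as [B1 B2].
      assert (Hneg : (Int_part s < 0)%Z) by (apply lt_IZR; cbn; lra).
      destruct (Int_part s); [lia|lia|reflexivity].
  - rewrite (Int_part_eq s (Z.of_nat (S j))), Nat2Z.id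
      by (rewrite <- INR_IZR_INZ, S_INR; lra).
    rewrite !S_INR; replace s with (INR j + 1) by lra; ring.
Qed.

Lemma height_step_abs t r : Rabs (INR (height t (S r)) - INR (height t r)) <= 1.
Proof.
  destruct (height_step t r) as [A1 A2]; apply le_INR in A1, A2; rewrite S_INR in A1, A2.
  apply Rabs_le; lra.
Qed.

Lemma contour_piece_lipschitz t j s s' :
  Rabs (contour_piece t j s - contour_piece t j s') <= Rabs (s - s').
Proof.
  unfold contour_piece.
  replace (_ - _) with ((s - s') * (INR (height t (S j)) - INR (height t j))) by ring.
  rewrite Rabs_mult; pose proof (height_step_abs t j); pose proof (Rabs_pos (s - s')); nra.
Qed.

Lemma contour_lipschitz_upto t m s s' :
  s <= s' <= INR m -> Rabs (contour t s - contour t s') <= s' - s.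
Proof.
  assert (Hpiece : forall j u u', (INR j <= u \/ j = 0%nat) -> u <= u' <= INR j + 1 ->
            Rabs (contour t u - contour t u') <= u' - u).
  { intros j u u' Hu Hu'.
    assert (Hu'j : INR j <= u' \/ j = 0%nat) by (destruct Hu; [left; lra|now right]).
    rewrite (contour_eq_piece t j u), (contour_eq_piece t j u') by (assumption || lra).
    rewrite <- (Rabs_right (u' - u)), Rabs_minus_sym by lra; apply contour_piece_lipschitz. }
  revert s s'; induction m as [|m IH]; intros s s' [H1 H2].
  { apply (Hpiece 0%nat); [now right|cbn in *; lra]. }
  rewrite S_INR in H2; destruct (Rle_or_lt s' (INR m)) as [H3|H3]; [apply IH; lra|].
  destruct (Rle_or_lt (INR m) s) as [H4|H4]; [apply (Hpiece m); [now left|lra]|].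
  pose proof (IH s (INR m) ltac:(lra)).
  pose proof (Hpiece m (INR m) s' (or_introl (Rle_refl _)) ltac:(lra)).
  pose proof (Rabs_triang (contour t s - contour t (INR m)) (contour t (INR m) - contour t s')).
  replace (contour t s - contour t (INR m) + (contour t (INR m) - contour t s'))
    with (contour t s - contour t s') in * by ring.
  lra.
Qed.

Lemma contour_lipschitz t s s' : Rabs (contour t s - contour t s') <= Rabs (s - s').
Proof.
  destruct (INR_archimed 1 (Rmax s s') ltac:(lra)) as [m Hm].
  pose proof (Rmax_l s s'); pose proof (Rmax_r s s').
  destruct (Rle_or_lt s s').
  - rewrite (Rabs_minus_sym s s'), (Rabs_right (s' - s)) by lra.
    apply (contour_lipschitz_upto t m); lra.
  - rewrite (Rabs_minus_sym (contour t s)), (Rabs_right (s - s')) by lra.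
    apply (contour_lipschitz_upto t m); lra.
Qed.

Section RangeMinimum.
Variable h : R -> R.
Hypothesis h_lipschitz : forall u v, Rabs (h u - h v) <= Rabs (u - v).

Lemma mh_glb a b : a <= b ->
  (forall u, a <= u <= b -> mh h a b <= h u) /\
  (forall m, (forall u, a <= u <= b -> m <= h u) -> m <= mh h a b).
Proof.
  intro Hab; unfold mh; rewrite Rmin_left, Rmax_right by lra.
  set (E := fun y => exists u, a <= u <= b /\ y = h u).
  destruct (Glb_Rbar_correct E) as [G1 G2].
  assert (Hlb : is_lb_Rbar E (Finite (h a - (b - a)))).
  { intros y [u [Hu ->]]; cbn; pose proof (h_lipschitz u a) as Hua.
    apply Rabs_le_between in Hua; rewrite (Rabs_right (u - a)) in Hua by lra; lra. }
  assert (Ea : E (h a)) by (exists a; split; [lra|reflexivity]).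
  pose proof (G1 _ Ea) as Ga; pose proof (G2 _ Hlb) as Gb.
  destruct (Glb_Rbar E) as [r| |]; cbn in *; try contradiction; split.
  - intros u Hu; exact (G1 (h u) (ex_intro _ u (conj Hu eq_refl))).
  - intros m Hm; apply (G2 (Finite m)); intros y [u [Hu ->]]; cbn; auto.
Qed.

Lemma mh_lipschitz_half a b a' b' d : a <= b -> a' <= b' ->
  Rabs (a - a') <= d -> Rabs (b - b') <= d -> mh h a' b' - d <= mh h a b.
Proof.
  intros Hab Hab' Ha Hb; apply (proj2 (mh_glb a b Hab)); intros u Hu.
  set (u' := Rmax a' (Rmin b' u)).
  apply Rabs_le_between in Ha, Hb.
  assert (Hu' : a' <= u' <= b') by (unfold u', Rmax, Rmin; repeat destruct Rle_dec; lra).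
  assert (Hd : Rabs (u - u') <= d)
    by (apply Rabs_le_between; unfold u', Rmax, Rmin; repeat destruct Rle_dec; lra).
  pose proof (proj1 (mh_glb a' b' Hab') u' Hu').
  pose proof (h_lipschitz u u') as Huu; apply Rabs_le_between in Huu; lra.
Qed.

Lemma mh_lipschitz a b a' b' d : a <= b -> a' <= b' ->
  Rabs (a - a') <= d -> Rabs (b - b') <= d -> Rabs (mh h a b - mh h a' b') <= d.
Proof.
  intros Hab Hab' Ha Hb; apply Rabs_le_between; split.
  - pose proof (mh_lipschitz_half a b a' b' d Hab Hab' Ha Hb); lra.
  - rewrite Rabs_minus_sym in Ha, Hb.
    pose proof (mh_lipschitz_half a' b' a b d Hab' Hab Ha Hb); lra.
Qed.

End RangeMinimum.

(** * The integrand on cells of side 1/2 *)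

Lemma lmin_le xs x : In x xs -> lmin xs <= x.
Proof.
  destruct xs as [|y ys]; [intros []|]; cbn; intros [->|Hx].
  - induction ys as [|z ys IH]; cbn; [lra|].
    pose proof (Rmin_r z (fold_right Rmin x ys)); lra.
  - induction ys as [|z ys IH]; cbn in *; [destruct Hx|].
    destruct Hx as [<-|Hx]; [apply Rmin_l|].
    pose proof (Rmin_r z (fold_right Rmin y ys)); specialize (IH Hx); lra.
Qed.

Lemma lmax_ge xs x : In x xs -> x <= lmax xs.
Proof.
  destruct xs as [|y ys]; [intros []|]; cbn; intros [->|Hx].
  - induction ys as [|z ys IH]; cbn; [lra|].
    pose proof (Rmax_r z (fold_right Rmax x ys)); lra.
  - induction ys as [|z ys IH]; cbn in *; [destruct Hx|].
    destruct Hx as [<-|Hx]; [apply Rmax_l|].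
    pose proof (Rmax_r z (fold_right Rmax y ys)); specialize (IH Hx); lra.
Qed.

Lemma lmin_in xs : xs <> [] -> In (lmin xs) xs.
Proof.
  destruct xs as [|y ys]; [congruence|]; intros _; cbn.
  induction ys as [|z ys IH]; cbn; [now left|].
  destruct (Rle_dec z (fold_right Rmin y ys)).
  - rewrite Rmin_left by assumption; now right; left.
  - rewrite Rmin_right by lra; cbn in IH; tauto.
Qed.

Lemma lmax_in xs : xs <> [] -> In (lmax xs) xs.
Proof.
  destruct xs as [|y ys]; [congruence|]; intros _; cbn.
  induction ys as [|z ys IH]; cbn; [now left|].
  destruct (Rle_dec z (fold_right Rmax y ys)).
  - rewrite Rmax_right by assumption; cbn in IH; tauto.
  - rewrite Rmax_left by lra; now right; left.
Qed.

Lemma lmin_le_lmax xs : lmin xs <= lmax xs.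
Proof.
  destruct xs as [|y ys]; [cbn; lra|].
  apply Rle_trans with y; [apply lmin_le|apply lmax_ge]; now left.
Qed.

Lemma Forall2_in_l {A B} (P : A -> B -> Prop) xs ys x :
  Forall2 P xs ys -> In x xs -> exists y, In y ys /\ P x y.
Proof.
  induction 1 as [|x' y xs ys Hxy _ IH]; intros Hx; [destruct Hx|].
  destruct Hx as [<-|Hx]; [exists y; split; [now left|assumption]|].
  destruct (IH Hx) as [y' [Hy' Py']]; exists y'; split; [now right|assumption].
Qed.

Lemma Forall2_in_r {A B} (P : A -> B -> Prop) xs ys y :
  Forall2 P xs ys -> In y ys -> exists x, In x xs /\ P x y.
Proof. intro HP; exact (Forall2_in_l _ _ _ y (Forall2_flip HP)). Qed.

Definition sup_close (d : R) (xs ys : list R) : Prop :=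
  Forall2 (fun x y => Rabs (x - y) <= d) xs ys.

Lemma sup_close_sym d xs ys : sup_close d xs ys -> sup_close d ys xs.
Proof.
  intro H; apply Forall2_flip in H; revert H; apply Forall2_impl.
  intros; now rewrite Rabs_minus_sym.
Qed.

Lemma sup_close_refl d xs : 0 <= d -> sup_close d xs xs.
Proof. intro; induction xs; constructor; [now rewrite Rminus_diag, Rabs_R0|assumption]. Qed.

Lemma lmin_sup_close_half d xs ys : sup_close d xs ys -> xs <> [] -> lmin ys <= lmin xs + d.
Proof.
  intros C Hne; destruct (Forall2_in_l _ _ _ _ C (lmin_in xs Hne)) as [y [Hy Hd]].
  pose proof (lmin_le ys y Hy); apply Rabs_le_between in Hd; lra.
Qed.

Lemma lmax_sup_close_half d xs ys : sup_close d xs ys -> xs <> [] -> lmax xs <= lmax ys + d.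
Proof.
  intros C Hne; destruct (Forall2_in_l _ _ _ _ C (lmax_in xs Hne)) as [y [Hy Hd]].
  pose proof (lmax_ge ys y Hy); apply Rabs_le_between in Hd; lra.
Qed.

Lemma lmin_lmax_sup_close d xs ys : 0 <= d -> sup_close d xs ys ->
  Rabs (lmin xs - lmin ys) <= d /\ Rabs (lmax xs - lmax ys) <= d.
Proof.
  intros Hd C; destruct xs as [|x xs'].
  { inversion C; cbn; rewrite Rminus_0_r, Rabs_R0; now split. }
  assert (Hy : ys <> []) by (inversion C; congruence).
  pose proof (lmin_sup_close_half d _ _ C ltac:(congruence)).
  pose proof (lmin_sup_close_half d _ _ (sup_close_sym _ _ _ C) Hy).
  pose proof (lmax_sup_close_half d _ _ C ltac:(congruence)).
  pose proof (lmax_sup_close_half d _ _ (sup_close_sym _ _ _ C) Hy).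
  split; apply Rabs_le_between; lra.
Qed.

Definition lipschitz_sup (L : R) (f : list R -> R) : Prop :=
  forall d xs ys, 0 <= d -> sup_close d xs ys -> Rabs (f xs - f ys) <= L * d.

Lemma lipschitz_sup_cons L f x : lipschitz_sup L f -> lipschitz_sup L (fun xs => f (x :: xs)).
Proof.
  intros Hf d xs ys Hd C; apply Hf; [assumption|].
  constructor; [now rewrite Rminus_diag, Rabs_R0|assumption].
Qed.

Lemma lipschitz_sup_head L f x y xs :
  lipschitz_sup L f -> Rabs (f (x :: xs) - f (y :: xs)) <= L * Rabs (x - y).
Proof.
  intro Hf; apply Hf; [apply Rabs_pos|].
  constructor; [lra|apply sup_close_refl, Rabs_pos].
Qed.

Definition contour_range_min (t : tree) (xs : list R) : R :=
  mh (contour t) (2 * lmin xs) (2 * lmax xs).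

Lemma contour_range_min_lipschitz t : lipschitz_sup 2 (contour_range_min t).
Proof.
  intros d xs ys Hd C; unfold contour_range_min.
  destruct (lmin_lmax_sup_close d xs ys Hd C) as [Hmin Hmax].
  pose proof (lmin_le_lmax xs); pose proof (lmin_le_lmax ys).
  apply mh_lipschitz; [apply contour_lipschitz|lra|lra| |];
    rewrite <- Rmult_minus_distr_l, Rabs_mult, Rabs_right; lra.
Qed.

Definition in_cells (xs : list R) (J : list nat) : Prop :=
  Forall2 (fun x j => INR j / 2 <= x <= INR (S j) / 2) xs J.

Lemma lmin_in_cells xs J : in_cells xs J -> J <> [] ->
  INR (nat_lmin J) <= 2 * lmin xs <= INR (nat_lmin J) + 1.
Proof.
  intros C HJ; assert (Hxs : xs <> []) by (intros ->; inversion C; congruence).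
  split.
  - destruct (Forall2_in_l _ _ _ _ C (lmin_in xs Hxs)) as [j [Hj [Hx _]]].
    pose proof (le_INR _ _ (nat_lmin_le J j Hj)); lra.
  - destruct (Forall2_in_r _ _ _ _ C (nat_lmin_in J HJ)) as [x [Hx [_ Hx2]]].
    pose proof (lmin_le xs x Hx); rewrite S_INR in Hx2; lra.
Qed.

Lemma lmax_in_cells xs J : in_cells xs J -> J <> [] ->
  INR (nat_lmax J) <= 2 * lmax xs <= INR (nat_lmax J) + 1.
Proof.
  intros C HJ; assert (Hxs : xs <> []) by (intros ->; inversion C; congruence).
  split.
  - destruct (Forall2_in_r _ _ _ _ C (nat_lmax_in J HJ)) as [x [Hx [Hx2 _]]].
    pose proof (lmax_ge xs x Hx); lra.
  - destruct (Forall2_in_l _ _ _ _ C (lmax_in xs Hxs)) as [j [Hj [_ Hx]]].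
    pose proof (le_INR _ _ (nat_lmax_ge J j Hj)); rewrite S_INR in Hx; lra.
Qed.

Lemma unit_interval_cover a b u : (a <= b)%nat -> INR a <= u <= INR b + 1 ->
  exists r, (a <= r <= b)%nat /\ INR r <= u <= INR r + 1.
Proof.
  revert u; induction b as [|b IH]; intros u Hab Hu.
  { exists 0%nat; replace a with 0%nat in * by lia; cbn in *; split; [lia|lra]. }
  destruct (Rle_or_lt (INR (S b)) u) as [H|H]; [exists (S b); split; [lia|lra]|].
  destruct (Nat.eq_dec a (S b)) as [->|Hne]; [lra|].
  rewrite S_INR in H; destruct (IH u ltac:(lia) ltac:(lra)) as [r [Hr Hur]].
  exists r; split; [lia|assumption].
Qed.

Lemma contour_piece_ge t r u m : INR r <= u <= INR r + 1 ->
  m <= INR (height t r) -> m <= INR (height t (S r)) -> m <= contour_piece t r u.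
Proof. unfold contour_piece; nra. Qed.

Lemma contour_piece_le t r u m : INR r <= u <= INR r + 1 ->
  INR (height t r) <= m -> INR (height t (S r)) <= m -> contour_piece t r u <= m.
Proof. unfold contour_piece; nra. Qed.

Lemma contour_range_min_in_cells t xs J : J <> [] -> in_cells xs J ->
  INR (length (mrca (map (edge_label t) J))) - 1 <= contour_range_min t xs
  <= INR (length (mrca (map (edge_label t) J))).
Proof.
  intros HJ C; rewrite length_mrca_edge_labels by assumption.
  set (a := nat_lmin J); set (b := nat_lmax J).
  assert (Hab : (a <= b)%nat)
    by (pose proof (nat_lmin_in J HJ); apply Nat.le_trans with (nat_lmin J);
        [lia|now apply nat_lmax_ge]).
  destruct (lcp_edge_labels t a b Hab) as [Htop [Hrange Hattained]].
  set (X := length (lcp (edge_label t a) (edge_label t b))) in *.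
  pose proof (lmin_in_cells xs J C HJ) as Hs; pose proof (lmax_in_cells xs J C HJ) as Hs'.
  fold a in Hs; fold b in Hs'.
  set (s := 2 * lmin xs) in *; set (s' := 2 * lmax xs) in *.
  assert (Hss : s <= s') by (unfold s, s'; pose proof (lmin_le_lmax xs); lra).
  destruct (mh_glb (contour t) (contour_lipschitz t) s s' Hss) as [Hle Hglb].
  unfold contour_range_min; fold s s'; split.
  - apply Hglb; intros u Hu.
    destruct (unit_interval_cover a b u Hab ltac:(lra)) as [r [Hr Hur]].
    rewrite (contour_eq_piece t r) by (lra || (left; lra)).
    assert (Hr_ge : (X <= S (height t r))%nat /\ (X <= S (height t (S r)))%nat).
    { destruct (height_step t r).
      destruct (Nat.eq_dec r a) as [->|Hne]; [unfold edge_top in Htop; lia|].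
      specialize (Hrange r ltac:(lia)); lia. }
    destruct Hr_ge as [N1 N2]; apply le_INR in N1, N2; rewrite S_INR in N1, N2.
    apply contour_piece_ge; lra.
  - destruct Hattained as [E|[r [Hr E]]].
    + apply Rle_trans with (contour t s); [apply Hle; lra|].
      rewrite (contour_eq_piece t a) by (lra || (left; lra)).
      apply contour_piece_le; [lra| |]; apply le_INR; rewrite E; unfold edge_top; lia.
    + assert (Hr1 : INR (S a) <= INR r) by (apply le_INR; lia).
      assert (Hr2 : INR r <= INR b) by (apply le_INR; lia); rewrite S_INR in Hr1.
      apply Rle_trans with (contour t (INR r)); [apply Hle; lra|].
      rewrite (contour_eq_piece t r) by (lra || (left; lra)).
      unfold contour_piece; rewrite E; lra.
Qed.

(** * Iterated integrals over the cube *)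

Lemma lipschitz_continuous (phi : R -> R) K : 0 <= K ->
  (forall x y, Rabs (phi x - phi y) <= K * Rabs (x - y)) -> forall x, continuous phi x.
Proof.
  intros HK Hphi x; apply continuity_pt_filterlim.
  intros eps Heps; exists (eps / (K + 1)); split; [apply Rdiv_lt_0_compat; lra|].
  intros y [_ Hy]; cbn in *; unfold R_dist in *; pose proof (Hphi y x).
  assert (K * Rabs (y - x) <= K * (eps / (K + 1))) by (apply Rmult_le_compat_l; lra).
  assert (K * (eps / (K + 1)) < eps).
  { apply Rmult_lt_reg_r with (K + 1); [lra|].
    unfold Rdiv; rewrite !Rmult_assoc, Rinv_l by lra; nra. }
  lra.
Qed.

Lemma ex_RInt_lipschitz (phi : R -> R) K a b : 0 <= K ->
  (forall x y, Rabs (phi x - phi y) <= K * Rabs (x - y)) -> ex_RInt phi a b.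
Proof.
  intros HK Hphi; apply (@ex_RInt_continuous R_CompleteNormedModule); intros z _.
  now apply (lipschitz_continuous phi K).
Qed.

Lemma RInt_between_const (phi : R -> R) a b lo hi : a <= b -> ex_RInt phi a b ->
  (forall x, a < x < b -> lo <= phi x <= hi) ->
  (b - a) * lo <= RInt phi a b <= (b - a) * hi.
Proof.
  intros Hab Hphi Hbounds; split;
    [rewrite <- (RInt_const a b lo) at 1|rewrite <- (RInt_const a b hi) at 1];
    apply RInt_le; auto using ex_RInt_const; intros x Hx; apply Hbounds, Hx.
Qed.

Lemma cube_int_S k a b f :
  cube_int (S k) a b f = RInt (fun x => cube_int k a b (fun xs => f (x :: xs))) a b.
Proof. reflexivity. Qed.

Lemma cube_int_dist k N L f g e : 0 <= N -> 0 <= L ->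
  lipschitz_sup L f -> lipschitz_sup L g -> (forall xs, Rabs (f xs - g xs) <= e) ->
  Rabs (cube_int k 0 N f - cube_int k 0 N g) <= N ^ k * e.
Proof.
  intros HN HL; revert f g e; induction k as [|k IH]; intros f g e Hf Hg He.
  { cbn; now rewrite Rmult_1_l. }
  rewrite !cube_int_S.
  assert (Hex : forall h, lipschitz_sup L h ->
            ex_RInt (fun x => cube_int k 0 N (fun xs => h (x :: xs))) 0 N).
  { intros h Hh; apply (ex_RInt_lipschitz _ (N ^ k * L)); [apply Rmult_le_pos; auto using pow_le|].
    intros x y; rewrite Rmult_assoc; apply IH; auto using lipschitz_sup_cons.
    intro; now apply lipschitz_sup_head. }
  set (F := fun x => cube_int k 0 N (fun xs => f (x :: xs))).
  set (G := fun x => cube_int k 0 N (fun xs => g (x :: xs))).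
  change (RInt F 0 N - RInt G 0 N) with (minus (RInt F 0 N) (RInt G 0 N)).
  rewrite <- RInt_minus by (apply Hex; assumption).
  replace (N ^ S k * e) with ((N - 0) * (N ^ k * e)) by (cbn; ring).
  apply abs_RInt_le_const; [assumption|apply ex_RInt_minus; apply Hex; assumption|].
  intros x _; apply IH; auto using lipschitz_sup_cons.
Qed.

(* Integrating out the last [k] variables keeps the Lipschitz dependence on the first one;
   this is what makes the iterated Riemann integrals exist. *)
Lemma cube_int_head_lipschitz k N L f x y : 0 <= N -> 0 <= L -> lipschitz_sup L f ->
  Rabs (cube_int k 0 N (fun xs => f (x :: xs)) - cube_int k 0 N (fun xs => f (y :: xs)))
  <= N ^ k * L * Rabs (x - y).
Proof.
  intros HN HL Hf; rewrite Rmult_assoc; apply (cube_int_dist k N L); auto using lipschitz_sup_cons.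
  intro; now apply lipschitz_sup_head.
Qed.

Definition sumR (l : list R) : R := fold_right Rplus 0 l.

Lemma sumR_app l1 l2 : sumR (l1 ++ l2) = sumR l1 + sumR l2.
Proof. induction l1 as [|x l1 IH]; unfold sumR in *; cbn; [ring|]; rewrite IH; ring. Qed.

Lemma sumR_le {A} (f g : A -> R) L :
  (forall x, In x L -> f x <= g x) -> sumR (map f L) <= sumR (map g L).
Proof.
  induction L as [|x L IH]; intro H; cbn; [lra|].
  apply Rplus_le_compat; [apply H; now left|apply IH; intros; apply H; now right].
Qed.

Lemma sumR_scal {A} (f : A -> R) c L : sumR (map (fun x => c * f x) L) = c * sumR (map f L).
Proof. induction L as [|x L IH]; unfold sumR in *; cbn; [ring|]; rewrite IH; ring. Qed.

Lemma sumR_flat_map_cons {A} (h : list A -> R) T L :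
  sumR (map h (flat_map (fun x => map (cons x) T) L))
  = sumR (map (fun x => sumR (map (fun u => h (x :: u)) T)) L).
Proof.
  induction L as [|x L IH]; [reflexivity|]; cbn.
  now rewrite map_app, sumR_app, IH, map_map.
Qed.

Lemma sumR_INR {A} (g : A -> nat) T : sumR (map (fun J => INR (g J)) T) = INR (list_sum (map g T)).
Proof.
  induction T as [|x T IH]; [reflexivity|]; cbn.
  unfold sumR in IH; now rewrite IH, plus_INR.
Qed.

Lemma sumR_sub_1 {A} (F : A -> R) T :
  sumR (map (fun J => F J - 1) T) = sumR (map F T) - INR (length T).
Proof.
  induction T as [|x T IH]; unfold sumR in *; cbn [map fold_right length]; [cbn; ring|].
  rewrite IH, S_INR; ring.
Qed.

Lemma RInt_half_steps (phi : R -> R) : (forall a b, ex_RInt phi a b) -> forall m,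
  RInt phi 0 (INR m / 2) = sumR (map (fun j => RInt phi (INR j / 2) (INR (S j) / 2)) (seq 0 m)).
Proof.
  intros Hex m; induction m as [|m IH].
  { replace (INR 0 / 2) with 0 by (simpl; field); rewrite RInt_point; reflexivity. }
  rewrite seq_S, Nat.add_0_l, map_app, sumR_app, <- IH; unfold sumR; cbn [map fold_right].
  rewrite Rplus_0_r, <- (RInt_Chasles phi 0 (INR m / 2) (INR (S m) / 2)) by apply Hex.
  reflexivity.
Qed.

(* Cutting the cube into the cells of side 1/2 indexed by [tuples k (seq 0 (2 * N))]. *)
Lemma cube_int_cell_bounds (N : nat) k L f (lo hi : list nat -> R) :
  0 <= L -> lipschitz_sup L f ->
  (forall xs J, length J = k -> in_cells xs J -> lo J <= f xs <= hi J) ->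
  (/ 2) ^ k * sumR (map lo (tuples k (seq 0 (2 * N)))) <= cube_int k 0 (INR N) f
  <= (/ 2) ^ k * sumR (map hi (tuples k (seq 0 (2 * N)))).
Proof.
  revert f lo hi; induction k as [|k IH]; intros f lo hi HL Hf Hbounds.
  { cbn; rewrite !Rplus_0_r, !Rmult_1_l; apply Hbounds; constructor. }
  set (T := tuples k (seq 0 (2 * N))).
  rewrite cube_int_S; cbn [tuples]; fold T; rewrite !sumR_flat_map_cons.
  set (phi := fun x => cube_int k 0 (INR N) (fun xs => f (x :: xs))).
  assert (Hex : forall a b, ex_RInt phi a b).
  { intros a b; apply (ex_RInt_lipschitz _ (INR N ^ k * L)).
    - apply Rmult_le_pos; [apply pow_le, pos_INR|assumption].
    - intros; apply cube_int_head_lipschitz; auto using pos_INR. }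
  replace (RInt phi 0 (INR N)) with (RInt phi 0 (INR (2 * N) / 2))
    by (f_equal; rewrite mult_INR; cbn; field).
  rewrite (RInt_half_steps phi Hex), <- !sumR_scal.
  assert (Hstep : forall j,
            (/ 2) ^ S k * sumR (map (fun u => lo (j :: u)) T)
            <= RInt phi (INR j / 2) (INR (S j) / 2)
            <= (/ 2) ^ S k * sumR (map (fun u => hi (j :: u)) T)).
  { intro j.
    assert (Hhalf : forall X, (/ 2) ^ S k * X = (INR (S j) / 2 - INR j / 2) * ((/ 2) ^ k * X))
      by (intros; rewrite S_INR; cbn; field).
    rewrite !Hhalf; apply RInt_between_const; [rewrite S_INR; lra|apply Hex|].
    intros x Hx; apply (IH _ (fun J => lo (j :: J)) (fun J => hi (j :: J)));
      auto using lipschitz_sup_cons.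
    intros xs J HJ HC; apply Hbounds; [cbn; lia|constructor; [lra|assumption]]. }
  split; apply sumR_le; intros j _; apply Hstep.
Qed.

Lemma inv2_pow_mul k x : (/ 2) ^ k * (INR (2 ^ k) * x) = x.
Proof.
  rewrite pow_INR, <- Rmult_assoc, <- Rpow_mult_distr; cbn [INR].
  replace (/ 2 * (1 + 1)) with 1 by field; rewrite pow1; ring.
Qed.

Theorem lemma7p1 (t : tree) (k : nat) (hk : (1 <= k)%nat) :
  0 <= INR (Dk k t) - calDk k t <= INR (size t) ^ k.
Proof.
  set (g := fun J => length (mrca (map (edge_label t) J))).
  assert (Hcells : forall xs J, length J = k -> in_cells xs J ->
            INR (g J) - 1 <= contour_range_min t xs <= INR (g J)).
  { intros xs J HJ; apply contour_range_min_in_cells; intros ->; cbn in HJ; lia. }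
  destruct (cube_int_cell_bounds (size t) k 2 (contour_range_min t) _ _ ltac:(lra)
              (contour_range_min_lipschitz t) Hcells) as [Hlo Hhi].
  rewrite sumR_INR in Hhi; unfold g in Hhi.
  rewrite sum_mrca_edge_labels, mult_INR, inv2_pow_mul in Hhi.
  rewrite sumR_sub_1, sumR_INR, length_tuples, length_seq, Rmult_minus_distr_l in Hlo.
  unfold g in Hlo; rewrite sum_mrca_edge_labels, mult_INR, inv2_pow_mul in Hlo.
  rewrite Nat.pow_mul_l, mult_INR, inv2_pow_mul, pow_INR in Hlo.
  change (cube_int k 0 (INR (size t)) (contour_range_min t)) with (calDk k t) in Hlo, Hhi.
  lra.
Qed.
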